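(* Let $m,n\in\mathbb Z^+\cup\{\infty\}$ with $m<n$, let $k=14$ and $\ell_i=14^i$ for $i\in\mathbb N$, and let $(p_j)$, $(q_j)$ be increasing sequences of positive integers with $p_j\ge |P_{(m,j)}|-1$ and $q_j\ge|P_{(n,j)}|-1$. Let $U_A=\{u_i\}\subset\{a,x\}_\circ^*$ with $u_i=\big(a^{14^{p_j-r_i}}x^{14^{p_j-r_i}}\big)^{14^{r_i+1}}$ for $i\in P_{(m,j)}$, $r_i=i-\min P_{(m,j)}$, and $V_B=\{v_i\}\subset\{b,y\}_\circ^*$ with $v_i=\big(b^{14^{q_j-r'_i}}y^{14^{q_j-r'_i}}\big)^{14^{r'_i+1}}$ for $i\in P_{(n,j)}$, $r'_i=i-\min P_{(n,j)}$ (where $a,x,b,y$ are four distinct letters). Suppose that for all $i,j\in\mathbb N$: (a) $p_{j+1}\ge p_j+(j+2)m$; (b) $q_{j+1}\ge q_j+(j+2)n$ if $n\in\mathbb Z^+$, and $q_{j+1}\ge q_j+(j+2)^2$ if $n=\infty$; (c) $p_{\lfloor i/m\rfloor}\le q_{\lfloor i/n\rfloor}$ if $n\in\mathbb Z^+$, and $p_{\lfloor i/m\rfloor}\le q_{\lfloor\sqrt i\rfloor}$ if $n=\infty$. Then, with $\lambda=1/13$, for all $i,i',j\in\mathbb N$: (1) $U_A$ and $V_B$ are cyclically minimal, cyclically reduced, and satisfy $C'(\lambda)$; (2) for all $h\in\mathbb Z$, every piece $p$ of $y^h$ and $v_i$ has $|p|<\lambda|v_i|$; (3) $2\le|u_i|\le|v_i|$;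 (4) $u_i=u_{i'}$ or $v_i=v_{i'}$ implies $i=i'$; (5) $(|u_i|)$ is constant on each block $P_{(m,j)}$ and $(|v_i|)$ is constant on each block $P_{(n,j)}$; (6) $|u_{(j+1)m}|\ge\ell_{(j+1)m}|u_{jm}|$; and $|v_{(j+1)n}|\ge\ell_{(j+1)n}|v_{jn}|$ if $n\in\mathbb Z^+$, while $|v_{(j+1)^2}|\ge\ell_{(j+1)^2}|v_{j^2}|$ if $n=\infty$.
   Context: For $m\in\mathbb Z^+$ let $P_{(m,j)}=\{jm,\dots,(j+1)m-1\}$ and for $m=\infty$ let $P_{(\infty,j)}=\{j^2,\dots,(j+1)^2-1\}$ ($j\in\mathbb N$). Words: $S_\circ=S\cup S^{-1}\cup\{1\}$, words in $S_\circ^*$, $|w|$ length; a word is reduced if it has no subword $1$, $ss^{-1}$, $s^{-1}s$. $R_*$ is the closure of $R$ under cyclic shifts and formal inverses; $R$ is cyclically reduced if every element of $R_*$ is reduced, cyclically minimal if $R\cap\{r\}_*=\{r\}$ for each $r\in R$. A piece of $u,v$ is a common prefix of some $u'\in\{u\}_*$, $v'\in\{v\}_*$. $R$ satisfies $C'(\lambda)$ if whenever $u,v\in R$ and $u'\in\{u\}_*$, $v'\in\{v\}_*$ have common prefix $p$, either $u'=v'$ or $|p|<\lambda\min(|u|,|v|)$. *)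

From mathcomp Require Import all_boot all_order all_algebra.
Set Implicit Arguments. Unset Strict Implicit. Unset Printing Implicit Defensive.
Import Order.TTheory GRing.Theory Num.Theory.

Inductive gen := GA | GX | GB | GY.

(* Elements of S_o = S u S^-1 u {1}. *)
Inductive letter := One | Pos of gen | Neg of gen.

Definition word := seq letter.

Definition linv (l : letter) : letter :=
  match l with One => One | Pos s => Neg s | Neg s => Pos s end.

Definition winv (w : word) : word := rev (map linv w).

Definition gpow (s : gen) (N : nat) : word := nseq N (Pos s).

Definition wpow (w : word) (N : nat) : word := flatten (nseq N w).

Definition ypow (h : int) : word :=
  match h with Posz k => nseq k (Pos GY) | Negz k => nseq k.+1 (Neg GY) end.

Definition reduced (w : word) : Prop :=
  forall w1 w2 : word,
    w <> w1 ++ One :: w2 /\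
    (forall s, w <> w1 ++ Pos s :: Neg s :: w2 /\ w <> w1 ++ Neg s :: Pos s :: w2).

Inductive star (R : word -> Prop) : word -> Prop :=
| star_base w : R w -> star R w
| star_rot k w : star R w -> star R (rot k w)
| star_inv w : star R w -> star R (winv w).

Definition sing (r : word) : word -> Prop := fun w => w = r.

Definition cyc_reduced (R : word -> Prop) : Prop :=
  forall w, star R w -> reduced w.

Definition cyc_minimal (R : word -> Prop) : Prop :=
  forall r, R r -> forall w, (R w /\ star (sing r) w) <-> w = r.

Definition is_prefix (p w : word) : Prop := exists s, w = p ++ s.

Definition piece (p u v : word) : Prop :=
  exists u' v', star (sing u) u' /\ star (sing v) v' /\ is_prefix p u' /\ is_prefix p v'.

Definition Cprime (lam : rat) (R : word -> Prop) : Prop :=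
  forall u v, R u -> R v -> forall u' v' p,
    star (sing u) u' -> star (sing v) v' -> is_prefix p u' -> is_prefix p v' ->
    u' = v' \/ ((size p)%:R < lam * (minn (size u) (size v))%:R :> rat)%R.

Inductive ext := Fin of nat | Inf.

Definition ext_pos (n : ext) : Prop :=
  match n with Fin k => 0 < k | Inf => True end.

Definition ext_lt (m n : ext) : Prop :=
  match m, n with
  | Fin a, Fin b => a < b
  | Fin _, Inf => True
  | Inf, _ => False
  end.

(* min P_(n,j) : j*n for finite n, j^2 for n = oo *)
Definition bstart (n : ext) (j : nat) : nat :=
  match n with Fin k => j * k | Inf => j ^ 2 end.

Definition inP (n : ext) (j i : nat) : Prop := bstart n j <= i < bstart n j.+1.

Definition bsize (n : ext) (j : nat) : nat := bstart n j.+1 - bstart n j.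

Definition bidx (n : ext) (i : nat) : nat :=
  match n with Fin k => i %/ k | Inf => Nat.sqrt i end.

Definition growth (n : ext) (j : nat) : nat :=
  match n with Fin k => (j + 2) * k | Inf => (j + 2) ^ 2 end.

Definition the_set (f : nat -> word) : word -> Prop := fun w => exists i, w = f i.

(* Each relator has the form r = (c^N d^N)^K with N = 14^e, K = 14^(o+1) >= 14,
   where o is the position of the index inside its block and e = p_j - o.  The
   word r, and every cyclic shift of r or of its formal inverse, is a "square
   wave": its t-th letter is c1 or c2 according to the parity of (t + k) / N for
   some phase k.  The heart of the proof is a rigidity statement (wave_rigid):
   two square waves of half-periods N, N' that agree on more than 2 min(N, N')
   letters have N = N' and the same phase modulo 2N, because a wave changes
   letter exactly at the positions t with N | t + k + 1.  Consequently a common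
   prefix of two conjugates is either shorter than 2 min(N, N') < |r| / 13 or the
   two conjugates coincide. *)

From Stdlib Require Import PeanoNat.
From mathcomp Require Import all_boot all_order all_algebra zify.
Set Implicit Arguments. Unset Strict Implicit. Unset Printing Implicit Defensive.

Lemma divn_lt_double N x : x < N.*2 -> x %/ N = (N <= x).
Proof.
case: (ltnP x N) => [lt_xN _|le_Nx lt_x2N]; first exact: divn_small.
have N0 : 0 < N by lia.
rewrite -(subnK le_Nx) divnDr // divnn N0 divn_small //; lia.
Qed.

Lemma odd_div_congr N x y : x = y %[mod N.*2] -> odd (x %/ N) = odd (y %/ N).
Proof. by move=> exy; rewrite -[LHS]oddb -[RHS]oddb -!modn2 !modn_divl mul2n exy. Qed.

Lemma odd_divS N x : 0 < N -> odd (x.+1 %/ N) = (N %| x.+1) (+) odd (x %/ N).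
Proof. by move=> N0; rewrite divnS // oddD oddb. Qed.

Lemma odd_div_addN N x : 0 < N -> odd ((x + N) %/ N) = ~~ odd (x %/ N).
Proof. by move=> N0; rewrite divnDr // divnn N0 addn1 /=. Qed.

(* Reflection: if x + y + 1 is a multiple of 2N, then x and y lie in opposite
   halves of their periods; this describes the formal inverse of a wave. *)
Lemma odd_div_compl N x y : 0 < N -> N.*2 %| x + y + 1 -> odd (x %/ N) = ~~ odd (y %/ N).
Proof.
move=> N0 dvd_sum.
rewrite -[LHS]oddb -[odd (y %/ N)]oddb -!modn2 !modn_divl mul2n.
have lt_a : x %% N.*2 < N.*2 by rewrite ltn_pmod // double_gt0.
have lt_b : y %% N.*2 < N.*2 by rewrite ltn_pmod // double_gt0.
have : N.*2 %| x %% N.*2 + y %% N.*2 + 1 by rewrite /dvdn -modnDml modnDm modnDml -/(dvdn _ _).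
move: lt_a lt_b; move: (x %% N.*2) (y %% N.*2) => a b lt_a lt_b /dvdnP [M eM].
have {eM} e_ab : a + b + 1 = N.*2 by case: M eM => [|[|M]]; rewrite ?mulSn; lia.
by rewrite !divn_lt_double //; case: (leqP N a) => ?; case: (leqP N b) => ? //=; lia.
Qed.

Lemma modn_double N k : k %% N.*2 = odd (k %/ N) * N + k %% N.
Proof.
rewrite {1}(divn_eq (k %% N.*2) N) -modn2 modn_divl mul2n modn_dvdm //.
by rewrite -mul2n dvdn_mull.
Qed.

Lemma eqn_mod_double N k k' :
  k = k' %[mod N] -> odd (k %/ N) = odd (k' %/ N) -> k = k' %[mod N.*2].
Proof. by move=> ek ok; rewrite !modn_double ek ok. Qed.

(* The first two letter changes of the N-wave, at c and
   c + N, must also be letter changes of the N'-wave, so N' divides N. *)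
Lemma wave_rigid N N' k k' P : 0 < N -> 0 < N' ->
  (forall i, i < P -> odd ((i + k) %/ N) = odd ((i + k') %/ N')) ->
  (minn N N').*2 < P -> N = N' /\ k = k' %[mod N.*2].
Proof.
wlog le_NN' : N N' k k' / N <= N'.
  move=> wlogH N0 N'0 agree ltP; case: (leqP N N') => [|/ltnW] le; first exact: wlogH.
  have [eN ek] : N' = N /\ k' = k %[mod N'.*2].
    by apply: wlogH => // [i /agree ->|]; rewrite // minnC.
  by rewrite -eN.
move=> N0 N'0 agree; rewrite (minn_idPl le_NN') => ltP.
have flip j : j.+1 < P -> (N %| (j + k).+1) = (N' %| (j + k').+1).
  move=> lt_jP; have := agree j.+1 lt_jP.
  rewrite !addSn !odd_divS // agree; last lia.
  by move/addIb.
set c := N.-1 - k %% N.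
have ck : (c + k).+1 = (k %/ N).+1 * N.
  have := ltn_pmod k N0; have := divn_eq k N; rewrite mulSn; lia.
have dvd_c : N' %| (c + k').+1.
  by rewrite -flip ?ck ?dvdn_mull //; lia.
have dvd_cN : N' %| (c + N + k').+1.
  rewrite -flip; last lia.
  rewrite (_ : (c + N + k).+1 = N + (c + k).+1); last lia.
  by rewrite dvdn_addr // ck dvdn_mull.
have eN : N = N'.
  apply/anti_leq; rewrite le_NN' dvdn_leq //.
  by rewrite -(dvdn_addr _ dvd_c) (_ : (c + k').+1 + N = (c + N + k').+1) //; lia.
subst N'; split=> //; apply: eqn_mod_double; last by have := agree 0; rewrite !add0n; apply; lia.
apply/eqP; rewrite -(eqn_modDl c.+1) !addSn ck modnMl eq_sym.
exact: dvd_c.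
Qed.

Definition square_wave (N k L : nat) (c1 c2 : letter) : word :=
  mkseq (fun i => if odd ((i + k) %/ N) then c2 else c1) L.

Lemma size_square_wave N k L c1 c2 : size (square_wave N k L c1 c2) = L.
Proof. exact: size_mkseq. Qed.

Lemma nth_square_wave N k L c1 c2 i : i < L ->
  nth One (square_wave N k L c1 c2) i = if odd ((i + k) %/ N) then c2 else c1.
Proof. exact: nth_mkseq. Qed.

Lemma square_wave_congr N k k' L c1 c2 : k = k' %[mod N.*2] ->
  square_wave N k L c1 c2 = square_wave N k' L c1 c2.
Proof.
move=> ek; apply: eq_mkseq => i.
by rewrite (@odd_div_congr N (i + k) (i + k')) // -modnDmr ek modnDmr.
Qed.

Lemma rot_square_wave N k L t c1 c2 : N.*2 %| L -> t <= L ->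
  rot t (square_wave N k L c1 c2) = square_wave N (k + t) L c1 c2.
Proof.
move=> dvd_L le_tL; apply: (eq_from_nth (x0 := One)) => [|i].
  by rewrite size_rot !size_square_wave.
rewrite size_rot size_square_wave => lt_iL.
rewrite nth_square_wave // /rot nth_cat size_drop size_square_wave.
case: ltnP => lt_i.
  rewrite nth_drop nth_square_wave; last lia.
  by congr (if odd (_ %/ N) then _ else _); lia.
rewrite nth_take ?nth_square_wave; try lia.
rewrite (@odd_div_congr N (i - (L - t) + k) (i + (k + t))) //.
rewrite -[in LHS](modnMDl (L %/ N.*2)) divnK //; congr (_ %% _); lia.
Qed.

Lemma winv_square_wave N k L c1 c2 : 0 < N -> N.*2 %| L ->
  winv (square_wave N k L c1 c2) = square_wave N ((N.*2).-1 * k) L (linv c2) (linv c1).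
Proof.
move=> N0 dvd_L; apply: (eq_from_nth (x0 := One)) => [|i].
  by rewrite /winv size_rev (size_map linv) !size_square_wave.
rewrite /winv size_rev (size_map linv) size_square_wave => lt_iL.
rewrite nth_rev (size_map linv) size_square_wave // (nth_map One) ?size_square_wave; last lia.
rewrite !nth_square_wave; try lia.
rewrite (@odd_div_compl N (L - i.+1 + k) (i + (N.*2).-1 * k)) //.
  by case: odd.
have -> : L - i.+1 + k + (i + (N.*2).-1 * k) + 1 = L + (k + (N.*2).-1 * k) by lia.
by rewrite -mulSn prednK ?double_gt0 // dvdn_addr // dvdn_mulr.
Qed.

Definition relator (c d : gen) (N K : nat) : word := wpow (gpow c N ++ gpow d N) K.

Lemma relator_square_wave c d N K :
  relator c d N K = square_wave N 0 (N.*2 * K) (Pos c) (Pos d).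
Proof.
elim: K => [|K IHK]; first by rewrite muln0.
have -> : relator c d N K.+1 = (gpow c N ++ gpow d N) ++ relator c d N K by [].
apply: (eq_from_nth (x0 := One)) => [|i].
  by rewrite !size_cat !size_nseq IHK !size_square_wave mulnS; lia.
rewrite !size_cat !size_nseq IHK size_square_wave => lt_i.
rewrite nth_square_wave ?mulnS; last lia.
rewrite nth_cat size_cat !size_nseq addnn addn0.
case: ltnP => lt_iN.
  rewrite nth_cat size_nseq !nth_nseq divn_lt_double //.
  by case: ltnP => lt_iN' //=; rewrite ifT //; lia.
rewrite nth_square_wave; last lia.
rewrite addn0 (@odd_div_congr N (i - N.*2) i) // -[in RHS](subnK lt_iN).
by rewrite modnDr.
Qed.

Definition wave_conj (c d : gen) (N L : nat) (w : word) : Prop :=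
  exists k, w = square_wave N k L (Pos c) (Pos d) \/ w = square_wave N k L (Neg d) (Neg c).

Lemma wave_conj_rot c d N L t w : N.*2 %| L ->
  wave_conj c d N L w -> wave_conj c d N L (rot t w).
Proof.
move=> dvd_L [k wk]; case: (leqP t L) => [le_tL|lt_Lt].
  by exists (k + t); case: wk => ->; [left|right]; rewrite rot_square_wave.
by exists k; rewrite rot_oversize //; case: wk => ->; rewrite size_square_wave ltnW.
Qed.

Lemma wave_conj_winv c d N L w : 0 < N -> N.*2 %| L ->
  wave_conj c d N L w -> wave_conj c d N L (winv w).
Proof.
move=> N0 dvd_L [k wk]; exists ((N.*2).-1 * k).
by case: wk => ->; [right|left]; rewrite winv_square_wave.
Qed.

Lemma star_relator c d N K w : 0 < N ->
  star (sing (relator c d N K)) w -> wave_conj c d N (N.*2 * K) w.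
Proof.
move=> N0; have dvd_L : N.*2 %| N.*2 * K by exact: dvdn_mulr.
elim=> [_ -> | t w' _ | w' _]; last 2 first.
- exact: wave_conj_rot.
- exact: wave_conj_winv.
by exists 0; left; rewrite relator_square_wave.
Qed.

Definition positive (l : letter) : bool := if l is Pos _ then true else false.
Definition negative (l : letter) : bool := if l is Neg _ then true else false.

Lemma reduced_of_all (Q : pred letter) w : all Q w -> ~~ Q One ->
  (forall s, ~~ (Q (Pos s) && Q (Neg s))) -> reduced w.
Proof.
move=> allQ Q1 Qs w1 w2; split=> [wE|s].
  by move: allQ; rewrite wE all_cat /= (negbTE Q1) andbF.
have no_pair a b : all Q (w1 ++ [:: a, b & w2]) -> Q a && Q b.
  by rewrite all_cat /= => /andP[_ /and3P[-> -> _]].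
by split=> wE; move: allQ (Qs s); rewrite wE => /no_pair; [|rewrite andbC] => ->.
Qed.

Lemma all_square_wave (Q : pred letter) N k L c1 c2 :
  Q c1 -> Q c2 -> all Q (square_wave N k L c1 c2).
Proof. by move=> Q1 Q2; rewrite all_map; apply/allP => i _ /=; case: ifP. Qed.

(* Cyclic conjugates of relators are reduced: their letters share one sign. *)
Lemma wave_conj_reduced c d N L w : wave_conj c d N L w -> reduced w.
Proof.
move=> [k [->|->]].
  by apply: (@reduced_of_all positive); rewrite ?all_square_wave.
by apply: (@reduced_of_all negative); rewrite ?all_square_wave.
Qed.

Lemma prefix_nth (p w : word) i : is_prefix p w -> i < size p -> nth One w i = nth One p i.
Proof. by move=> [s ->] lt_ip; rewrite nth_cat lt_ip. Qed.

Lemma prefix_size (p w : word) : is_prefix p w -> size p <= size w.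
Proof. by move=> [s ->]; rewrite size_cat leq_addr. Qed.

Lemma prefix_sign_clash (p w w' : word) : all positive w -> all negative w' ->
  is_prefix p w -> is_prefix p w' -> p = [::].
Proof.
case: p => // l p pos neg [s ws] [s' ws'].
by move: pos neg; rewrite {}ws {}ws'; case: l.
Qed.

Lemma square_wave_prefix N N' k k' L L' c1 c2 p : c1 <> c2 -> 0 < N -> 0 < N' ->
  is_prefix p (square_wave N k L c1 c2) -> is_prefix p (square_wave N' k' L' c1 c2) ->
  (minn N N').*2 < size p -> N = N' /\ k = k' %[mod N.*2].
Proof.
move=> c12 N0 N'0 pw pw' lt_p; apply: wave_rigid lt_p => // i lt_ip.
have := prefix_nth pw lt_ip; have := prefix_nth pw' lt_ip.
have le_pL : size p <= L by rewrite -(size_square_wave N k L c1 c2); apply: prefix_size.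
have le_pL' : size p <= L' by rewrite -(size_square_wave N' k' L' c1 c2); apply: prefix_size.
rewrite !nth_square_wave; try lia.
by move=> <-; case: odd; case: odd => // /esym.
Qed.

Lemma wave_conj_piece c d N N' L L' w w' p : c <> d -> 0 < N -> 0 < N' ->
  wave_conj c d N L w -> wave_conj c d N' L' w' -> is_prefix p w -> is_prefix p w' ->
  (minn N N').*2 < size p -> N = N' /\ (L = L' -> w = w').
Proof.
move=> cd N0 N'0 [k wk] [k' wk'] pw pw' lt_p.
have p_nil : p <> [::] by move=> p0; rewrite p0 in lt_p.
have same_family c1 c2 : c1 <> c2 ->
    is_prefix p (square_wave N k L c1 c2) -> is_prefix p (square_wave N' k' L' c1 c2) ->
    N = N' /\ (L = L' -> square_wave N k L c1 c2 = square_wave N' k' L' c1 c2).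
  move=> c12 pw1 pw1'; have [eN ek] := square_wave_prefix c12 N0 N'0 pw1 pw1' lt_p.
  by split=> // eL; rewrite -eN -eL; apply: square_wave_congr.
case: wk wk' pw pw' => -> [] -> pw pw'.
- by apply: same_family pw pw' => -[].
- by case: p_nil; apply: prefix_sign_clash pw pw'; rewrite all_square_wave.
- by case: p_nil; apply: prefix_sign_clash pw' pw; rewrite all_square_wave.
- by apply: same_family pw pw' => -[] /esym.
Qed.

Lemma rot_nseq t n (l : letter) : rot t (nseq n l) = nseq n l.
Proof.
case: (leqP t n) => [le_tn|/ltnW le_nt]; last by rewrite rot_oversize ?size_nseq.
by rewrite /rot drop_nseq take_nseq // -nseqD subnK.
Qed.

Lemma star_ypow h w : star (sing (ypow h)) w -> exists n l, w = nseq n l.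
Proof.
elim=> [_ -> | t _ _ [n [l ->]] | _ _ [n [l ->]]].
- by case: h => n; do 2 eexists.
- by exists n, l; rewrite rot_nseq.
- by exists n, (linv l); rewrite /winv map_nseq rev_nseq.
Qed.

Lemma square_wave_half_period N k L c1 c2 : c1 <> c2 -> 0 < N -> N < L ->
  nth One (square_wave N k L c1 c2) N <> nth One (square_wave N k L c1 c2) 0.
Proof.
move=> c12 N0 lt_NL; rewrite !nth_square_wave ?add0n 1?addnC ?odd_div_addN //; last lia.
by case: odd => // /esym.
Qed.

(* A piece of y^h and a relator (c^N d^N)^K, K >= 14, is a constant word; as a
   wave changes letter within N positions, it is at most N < |relator| / 13 long. *)
Lemma ypow_piece c d N K h w : c <> d -> 0 < N -> 14 <= K ->
  piece w (ypow h) (relator c d N K) -> 13 * size w < size (relator c d N K).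
Proof.
move=> cd N0 K14 [y' [r' [y'_conj [r'_conj [pw_y pw_r]]]]].
rewrite relator_square_wave size_square_wave.
suff le_wN : size w <= N by nia.
rewrite leqNgt; apply/negP => lt_Nw.
have [n [l y'E]] := star_ypow y'_conj.
have w_const i : i < size w -> nth One w i = l.
  move=> lt_iw; rewrite -(prefix_nth pw_y lt_iw) y'E nth_nseq ifT //.
  by have := prefix_size pw_y; rewrite y'E size_nseq; lia.
have [k r'E] := star_relator N0 r'_conj.
have r'_letters : nth One r' 0 = l /\ nth One r' N = l.
  by rewrite !(prefix_nth pw_r) ?w_const //; lia.
have lt_NL : N < N.*2 * K by nia.
case: r'_letters; case: r'E => -> <-; apply: square_wave_half_period => //.
- by case.
- by case=> /esym.
Qed.

Lemma star_the_set (F : nat -> word) w : star (the_set F) w -> exists i, star (sing (F i)) w.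
Proof.
elim=> [w0 [i ->] | t w0 _ [i Fi] | w0 _ [i Fi]]; exists i.
- exact: star_base.
- exact: star_rot.
- exact: star_inv.
Qed.

Lemma small_piece_rat (a b : nat) : 13 * a < b -> (a%:R < (1 / 13) * b%:R :> rat)%R.
Proof.
by move=> lt_ab; rewrite GRing.mul1r Num.Theory.ltr_pdivlMl // -GRing.natrM Num.Theory.ltr_nat.
Qed.

Section RelatorFamily.
Variables (c d : gen) (N K : nat -> nat) (F : nat -> word).
Hypothesis cd : c <> d.
Hypothesis N_gt0 : forall i, 0 < N i.
Hypothesis K_ge14 : forall i, 14 <= K i.
Hypothesis N_inj : injective N.
Hypothesis F_relator : forall i, F i = relator c d (N i) (K i).

Lemma size_family i : size (F i) = (N i).*2 * K i.
Proof. by rewrite F_relator relator_square_wave size_square_wave. Qed.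

Lemma family_wave_conj i w : star (sing (F i)) w -> wave_conj c d (N i) ((N i).*2 * K i) w.
Proof. by rewrite F_relator; apply: star_relator. Qed.

(* A conjugate of F i equal to some F i' has the same half-period, so i = i'. *)
Lemma family_conj_index i i' : star (sing (F i)) (F i') -> i = i'.
Proof.
move=> conj; apply: N_inj.
have self : wave_conj c d (N i') ((N i').*2 * K i') (F i') by apply/family_wave_conj/star_base.
have prefix_self : is_prefix (F i') (F i') by exists [::]; rewrite cats0.
have long : (minn (N i) (N i')).*2 < size (F i').
  rewrite size_family; have := geq_minr (N i) (N i'); have := K_ge14 i'.
  have := N_gt0 i'; nia.
by case: (wave_conj_piece cd (N_gt0 i) (N_gt0 i') (family_wave_conj conj) self
  prefix_self prefix_self long).
Qed.

Lemma family_injective : injective F.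
Proof. by move=> i i' eF; apply: family_conj_index; rewrite eF; apply: star_base. Qed.

Lemma family_cyc_minimal : cyc_minimal (the_set F).
Proof.
move=> _ [i ->] w; split=> [[[i' ->] /family_conj_index <-] // | ->].
by split; [exists i | apply: star_base].
Qed.

Lemma family_cyc_reduced : cyc_reduced (the_set F).
Proof. by move=> w /star_the_set [i /family_wave_conj /wave_conj_reduced]. Qed.

(* Either the common prefix is long, and then the two conjugates coincide, or
   it has length at most 2 min(N i, N i') < |F i| / 13, |F i'| / 13. *)
Lemma family_Cprime : Cprime (1 / 13) (the_set F).
Proof.
move=> _ _ [i ->] [i' ->] u' v' p conj conj' pu pv.
case: (ltnP (minn (N i) (N i')).*2 (size p)) => [long|short].
  have [eN eq_words] := wave_conj_piece cd (N_gt0 i) (N_gt0 i')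
    (family_wave_conj conj) (family_wave_conj conj') pu pv long.
  by left; apply: eq_words; rewrite (N_inj eN).
right; apply: small_piece_rat; rewrite !size_family leq_min.
have := geq_minl (N i) (N i'); have := geq_minr (N i) (N i').
have := K_ge14 i; have := K_ge14 i'; have := N_gt0 i; have := N_gt0 i'.
move=> *; apply/andP; split; nia.
Qed.

End RelatorFamily.

Lemma bstart_lt n j : ext_pos n -> bstart n j < bstart n j.+1.
Proof. by case: n => [k|] /= k_gt0; [rewrite mulSn | rewrite ltn_exp2r]; lia. Qed.

Lemma inP_bidx n i : ext_pos n -> inP n (bidx n i) i.
Proof.
rewrite /inP; case: n => [k|] /= k_gt0; first by rewrite leq_divM ltn_ceil.
have [le_sqrt lt_sqrt] := Nat.sqrt_specif i.
by rewrite !expnS !expn0 !muln1; apply/andP; split; [apply/leP | apply/ltP].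
Qed.

Lemma bidx_inP n j i : ext_pos n -> inP n j i -> bidx n i = j.
Proof.
move=> n_pos; have bstart_mono := homo_leq leqnn leq_trans (fun j => ltnW (bstart_lt j n_pos)).
move: (inP_bidx i n_pos); rewrite /inP => /andP[lo hi] /andP[lo' hi'].
case: (ltngtP (bidx n i) j) => // /bstart_mono; lia.
Qed.

Lemma bidx_bstart n j : ext_pos n -> bidx n (bstart n j) = j.
Proof. by move=> n_pos; apply: bidx_inP; rewrite // /inP leqnn bstart_lt. Qed.

Lemma bsize_lt_growth n j : ext_pos n -> bsize n j.+1 - 1 < growth n j.
Proof. by rewrite /bsize; case: n => [k|] /= k_gt0; rewrite ?expnS ?expn0; nia. Qed.

Lemma bstart_le_growth n j : bstart n j.+1 <= growth n j.
Proof. by case: n => [k|] /=; rewrite ?expnS ?expn0; nia. Qed.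

Section BlockFamily.
Variables (n : ext) (P : nat -> nat) (c d : gen) (F : nat -> word).
Hypothesis n_pos : ext_pos n.
Hypothesis cd : c <> d.
Hypothesis P_incr : forall j, P j < P j.+1.
Hypothesis P_bsize : forall j, bsize n j - 1 <= P j.
Hypothesis P_growth : forall j, P j + growth n j <= P j.+1.
Hypothesis F_block : forall j i, inP n j i ->
  F i = wpow (gpow c (14 ^ (P j - (i - bstart n j))) ++ gpow d (14 ^ (P j - (i - bstart n j))))
             (14 ^ ((i - bstart n j).+1)).

Definition offset (i : nat) : nat := i - bstart n (bidx n i).

Definition expo (i : nat) : nat := P (bidx n i) - offset i.

Lemma block_relator i : F i = relator c d (14 ^ expo i) (14 ^ (offset i).+1).
Proof. exact/F_block/inP_bidx. Qed.

Lemma offset_le i : offset i <= P (bidx n i).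
Proof.
by have := P_bsize (bidx n i); have := inP_bidx i n_pos; rewrite /inP /bsize /offset; lia.
Qed.

(* Exponents strictly increase from one block to the next, by the growth
   condition; within a block they strictly decrease, hence they are injective. *)
Lemma expo_lt i i' : bidx n i < bidx n i' -> expo i < expo i'.
Proof.
rewrite /expo /offset; have := inP_bidx i' n_pos; rewrite /inP.
case: (bidx n i') => // j' i'_in; rewrite ltnS.
move=> /(homo_leq leqnn leq_trans (fun j => ltnW (P_incr j))) le_P.
have := P_growth j'; have := bsize_lt_growth j' n_pos; rewrite /bsize; lia.
Qed.

Lemma expo_inj : injective expo.
Proof.
move=> i i' e; case: (ltngtP (bidx n i) (bidx n i')) => [/expo_lt|/expo_lt|eb].
- by rewrite e ltnn.
- by rewrite e ltnn.
move: e; have := offset_le i; have := offset_le i'.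
have := inP_bidx i n_pos; have := inP_bidx i' n_pos; rewrite /expo /offset /inP eb; lia.
Qed.

Lemma size_block i : size (F i) = 2 * 14 ^ (P (bidx n i)).+1.
Proof.
rewrite block_relator relator_square_wave size_square_wave -mul2n -mulnA -expnD.
by rewrite /expo addnS subnK ?offset_le.
Qed.

Lemma size_block_const j i i' : inP n j i -> inP n j i' -> size (F i) = size (F i').
Proof. by move=> /(bidx_inP n_pos) bi /(bidx_inP n_pos) bi'; rewrite !size_block bi bi'. Qed.

Lemma size_block_growth j :
  14 ^ bstart n j.+1 * size (F (bstart n j)) <= size (F (bstart n j.+1)).
Proof.
rewrite !size_block !bidx_bstart // mulnCA -expnD leq_mul2l leq_pexp2l //.
by have := P_growth j; have := bstart_le_growth n j; lia.
Qed.

Lemma block_family :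
  [/\ cyc_minimal (the_set F), cyc_reduced (the_set F), Cprime (1 / 13)%R (the_set F)
    & injective F].
Proof.
have N_gt0 i : 0 < 14 ^ expo i by rewrite expn_gt0.
have K_ge14 i : 14 <= 14 ^ (offset i).+1 by rewrite expnS leq_pmulr ?expn_gt0.
have N_inj : injective (fun i => 14 ^ expo i) by move=> i i' /(expnI (isT : 1 < 14)) /expo_inj.
split.
- exact: (family_cyc_minimal cd N_gt0 K_ge14 N_inj block_relator).
- exact: (@family_cyc_reduced c d _ (fun i => 14 ^ (offset i).+1) F N_gt0 block_relator).
- exact: (family_Cprime cd N_gt0 K_ge14 N_inj block_relator).
- exact: (family_injective cd N_gt0 K_ge14 N_inj block_relator).
Qed.
End BlockFamily.

Theorem lemma4p3 (m : nat) (n : ext) (p q : nat -> nat) (u v : nat -> word) :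
  ext_pos (Fin m) -> ext_pos n -> ext_lt (Fin m) n ->
  (forall j, 0 < p j) -> (forall j, p j < p j.+1) ->
  (forall j, 0 < q j) -> (forall j, q j < q j.+1) ->
  (forall j, bsize (Fin m) j - 1 <= p j) ->
  (forall j, bsize n j - 1 <= q j) ->
  (forall j i, inP (Fin m) j i ->
     u i = wpow (gpow GA (14 ^ (p j - (i - bstart (Fin m) j))) ++
                 gpow GX (14 ^ (p j - (i - bstart (Fin m) j))))
                (14 ^ ((i - bstart (Fin m) j).+1))) ->
  (forall j i, inP n j i ->
     v i = wpow (gpow GB (14 ^ (q j - (i - bstart n j))) ++
                 gpow GY (14 ^ (q j - (i - bstart n j))))
                (14 ^ ((i - bstart n j).+1))) ->
  (* (a) *) (forall j, p j + (j + 2) * m <= p j.+1) ->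
  (* (b) *) (forall j, q j + growth n j <= q j.+1) ->
  (* (c) *) (forall i, p (i %/ m) <= q (bidx n i)) ->
  let lam : rat := (1 / 13)%R in
  (* (1) *)
  (cyc_minimal (the_set u) /\ cyc_reduced (the_set u) /\ Cprime lam (the_set u) /\
   cyc_minimal (the_set v) /\ cyc_reduced (the_set v) /\ Cprime lam (the_set v)) /\
  (* (2) *)
  (forall (h : int) (i : nat) (w : word), piece w (ypow h) (v i) ->
     ((size w)%:R < lam * (size (v i))%:R :> rat)%R) /\
  (* (3) *)
  (forall i, 2 <= size (u i) <= size (v i)) /\
  (* (4) *)
  (forall i i', (u i = u i' -> i = i') /\ (v i = v i' -> i = i')) /\
  (* (5) *)
  (forall j i i', (inP (Fin m) j i -> inP (Fin m) j i' -> size (u i) = size (u i')) /\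
                  (inP n j i -> inP n j i' -> size (v i) = size (v i'))) /\
  (* (6) *)
  (forall j, 14 ^ (bstart (Fin m) j.+1) * size (u (bstart (Fin m) j))
               <= size (u (bstart (Fin m) j.+1)) /\
             14 ^ (bstart n j.+1) * size (v (bstart n j)) <= size (v (bstart n j.+1))).
Proof.
move=> m_pos n_pos _ _ p_incr _ q_incr p_bsize q_bsize u_block v_block p_growth q_growth
  p_le_q lam.
have ax : GA <> GX by []; have b_y : GB <> GY by [].
have [Umin Ured UC Uinj] := block_family m_pos ax p_incr p_bsize p_growth u_block.
have [Vmin Vred VC Vinj] := block_family n_pos b_y q_incr q_bsize q_growth v_block.
split; [done | split; [|split; [|split; [|split]]]].
- move=> h i w; rewrite (block_relator n_pos v_block) => piece_w.
  apply/small_piece_rat/(ypow_piece b_y _ _ piece_w); first by rewrite expn_gt0.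
  by rewrite expnS leq_pmulr ?expn_gt0.
- move=> i; rewrite (size_block m_pos p_bsize u_block) (size_block n_pos q_bsize v_block).
  by rewrite leq_pmulr ?expn_gt0 //= leq_mul2l leq_pexp2l // ltnS p_le_q.
- by move=> i i'; split=> [/Uinj|/Vinj].
- move=> j i i'; split.
  + exact: (size_block_const m_pos p_bsize u_block).
  + exact: (size_block_const n_pos q_bsize v_block).
- move=> j; split.
  + exact: (size_block_growth m_pos p_bsize p_growth u_block).
  + exact: (size_block_growth n_pos q_bsize q_growth v_block).
Qed.
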